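(* Fix $d\in\mathbb N$ and $1\le k\le d-1$. Let $S_\star$ be drawn uniformly from the $k$-element subsets of $[d]$. Given $S_\star$, draw $m$ i.i.d. samples $(x^{(i)},z^{(i)})$, $i=1,\dots,m$, where $x^{(i)}$ is uniform on $\{0,1\}^d$, $\pi^{(i)}$ is a uniformly random bijection $[k]\to S_\star$ (independent across $i$), and $z^{(i)}=(z^{(i)}_1,\dots,z^{(i)}_k)$ with $z^{(i)}_t=\bigoplus_{s=1}^t x^{(i)}_{\pi^{(i)}(s)}$. Then for any (possibly randomized) estimator $\hat S$ of $S_\star$ from the samples, achieving $\Pr[\hat S=S_\star]\ge1-\delta$ (probability over $S_\star$, the samples and the estimator) requires $$m\ge\frac{(1-\delta)\log\binom dk-1}{\log(k+1)}.$$ Moreover, for $k\le d/2$, this gives $m\ge\frac{(1-\delta)k\log(d/k)-1}{\log(k+1)}$. *)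

From HB Require Import structures.
From mathcomp Require Import all_boot all_order all_algebra.
From mathcomp Require Import all_classical all_reals.
From mathcomp Require Import exp.

Set Implicit Arguments.
Unset Strict Implicit.
Unset Printing Implicit Defensive.

Import Order.TTheory GRing.Theory Num.Theory.
Local Open Scope ring_scope.

Definition log2 {R : realType} (x : R) : R := ln x / ln 2.

(* the k labels z_1..z_k (0-indexed: label t : 'I_k is z_{t+1}) *)
Definition zof (d k : nat) (x : {ffun 'I_d -> bool}) (pi : {ffun 'I_k -> 'I_d})
  : {ffun 'I_k -> bool} :=
  [ffun t : 'I_k => \big[addb/false]_(s < k | (nat_of_ord s <= nat_of_ord t)%N) x (pi s)].

Definition bijs_onto (d k : nat) (S : {set 'I_d}) : {set {ffun 'I_k -> 'I_d}} :=
  [set pi : {ffun 'I_k -> 'I_d} | injectiveb pi && (pi @: [set: 'I_k] == S)].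

Definition sample (d k : nat) : finType :=
  ({ffun 'I_d -> bool} * {ffun 'I_k -> bool})%type.

(* probability of a single sample (x, z) given S_star = S:
   x uniform on {0,1}^d, pi uniform among bijections [k] -> S *)
Definition p_sample {R : realType} (d k : nat) (S : {set 'I_d}) (xz : sample d k) : R :=
  (2 ^+ d)^-1 *
  (#|[set pi in bijs_onto k S | zof xz.1 pi == xz.2]|%:R / #|bijs_onto k S|%:R).

Definition p_samples {R : realType} (d k m : nat) (S : {set 'I_d})
  (y : {ffun 'I_m -> sample d k}) : R :=
  \prod_(i < m) p_sample S (y i).

Definition ksubsets (d k : nat) : {set {set 'I_d}} := [set S : {set 'I_d} | #|S| == k].

(* a (possibly randomized) estimator: a Markov kernel from samples to subsets *)
Definition is_estimator {R : realType} (d k m : nat)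
  (est : {ffun 'I_m -> sample d k} -> {set 'I_d} -> R) : Prop :=
  forall y, (forall S, 0 <= est y S) /\ \sum_(S : {set 'I_d}) est y S = 1.

Definition success_prob {R : realType} (d k m : nat)
  (est : {ffun 'I_m -> sample d k} -> {set 'I_d} -> R) : R :=
  \sum_(S in ksubsets d k) (#|ksubsets d k|%:R)^-1 *
    \sum_(y : {ffun 'I_m -> sample d k}) p_samples S y * est y S.

From HB Require Import structures.
From mathcomp Require Import all_boot all_order all_algebra.
From mathcomp Require Import all_classical all_reals.
From mathcomp Require Import exp.
From mathcomp Require Import perm zify ring lra.
Import Order.TTheory GRing.Theory Num.Theory.
Local Open Scope ring_scope.

(* Given S_star = S and the features x, the labels are the prefix XORs of the
   colour word c = (x (pi 1), ..., x (pi k)); precomposing with a permutation of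
   [k] permutes the bijections pi, so all colour words of the same weight are
   equally likely.  Hence the likelihood of a sample (x, z) is at most 2^-d times
   the sum of 1 / #{words of weight |c|} over the words c with prefix XOR z: a
   bound that does not depend on S and whose total mass is at most k + 1, one
   unit per weight.  Over m samples this gives
   Pr[S_hat = S_star] <= (k + 1)^m / C(d, k), and Fano's inequality in the form
   a ln N <= ln Q + ln 2 (for a <= 1 and a N <= Q, since -a ln a <= ln 2) turns it
   into the bound on m; C(d, k) >= (d / k)^k gives the second form. *)

Lemma perm_eq_bool (s t : seq bool) :
  size s = size t -> count id s = count id t -> perm_eq s t.
Proof.
move=> eq_size eq_count_id; apply/allP => -[] _ /=.
  have count_true u : count_mem true u = count id u.
    by apply: eq_count => -[].
  by rewrite !count_true eq_count_id.
have count_false u : count_mem false u = (size u - count id u)%N.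
  by rewrite -(count_predC id u) addKn; apply: eq_count => -[].
by rewrite !count_false eq_size eq_count_id.
Qed.

Definition weight {k : nat} (c : {ffun 'I_k -> bool}) : nat := count c (enum 'I_k).

Definition weight_class {k : nat} (c : {ffun 'I_k -> bool}) : {set {ffun 'I_k -> bool}} :=
  [set c' | weight c' == weight c].

Lemma eq_weight_perm {k : nat} (c c' : {ffun 'I_k -> bool}) :
  weight c = weight c' -> exists s : {perm 'I_k}, forall i, c' i = c (s i).
Proof.
move=> eq_w.
have /tuple_permP[s Es] : perm_eq [seq c' i | i <- enum 'I_k] [tuple c i | i < k].
  apply: perm_eq_bool; first by rewrite size_map size_tuple size_enum_ord.
  by rewrite /= !count_map -!enumT; exact: esym eq_w.
exists s => i; have := congr1 (nth false ^~ i) Es.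
by rewrite (nth_map i) ?size_enum_ord // nth_ord_enum -tnth_nth !tnth_mktuple.
Qed.

Lemma sum_card_fibres {aT rT : finType} (A : {set aT}) (f : aT -> rT) :
  (\sum_(t : rT) #|[set a in A | f a == t]| = #|A|)%N.
Proof.
rewrite -sum1_card (partition_big f xpredT) //=.
by apply: eq_bigr => t _; rewrite -sum1_card; apply: eq_bigl => a; rewrite inE.
Qed.

Lemma bijs_onto_comp_perm {d k : nat} (S : {set 'I_d}) (s : {perm 'I_k}) pi :
  pi \in bijs_onto k S -> [ffun i => pi (s i)] \in bijs_onto k S.
Proof.
rewrite !inE => /andP[/injectiveP pi_inj /eqP <-]; apply/andP; split.
  by apply/injectiveP => i j; rewrite !ffunE => /pi_inj /perm_inj.
apply/eqP/setP => y; apply/imsetP/imsetP => -[i _ ->].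
  by exists (s i); rewrite ?ffunE.
by exists (s^-1 i)%g; rewrite ?ffunE ?permKV.
Qed.

Section ColourFibres.
Variables (d k : nat) (x : {ffun 'I_d -> bool}) (S : {set 'I_d}).

Definition colours (pi : {ffun 'I_k -> 'I_d}) : {ffun 'I_k -> bool} := [ffun i => x (pi i)].

Definition colour_fibre (c : {ffun 'I_k -> bool}) : {set {ffun 'I_k -> 'I_d}} :=
  [set pi in bijs_onto k S | colours pi == c].

Lemma card_colour_fibre_perm (s : {perm 'I_k}) c :
  (#|colour_fibre c| <= #|colour_fibre [ffun i => c (s i)]|)%N.
Proof.
pose comp_s (pi : {ffun 'I_k -> 'I_d}) : {ffun 'I_k -> 'I_d} := [ffun i => pi (s i)].
have comp_s_inj : injective comp_s.
  move=> p q /(congr1 (fun f : {ffun 'I_k -> 'I_d} => f (s^-1 _)%g)) E.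
  by apply/ffunP => j; move: (E j); rewrite !ffunE permKV.
rewrite -(card_imset _ comp_s_inj); apply/subset_leq_card/fintype.subsetP => q.
case/imsetP=> pi /setIdP[pi_bij /eqP <-] ->; apply/setIdP; split.
  exact: bijs_onto_comp_perm.
by apply/eqP/ffunP => i; rewrite !ffunE.
Qed.

Lemma card_colour_fibre_weight c c' :
  weight c = weight c' -> #|colour_fibre c| = #|colour_fibre c'|.
Proof.
have le_fibre c1 c2 :
    weight c1 = weight c2 -> (#|colour_fibre c1| <= #|colour_fibre c2|)%N.
  move=> /eq_weight_perm[s c2_perm].
  rewrite (_ : c2 = [ffun i => c1 (s i)]) ?card_colour_fibre_perm //.
  by apply/ffunP => i; rewrite ffunE.
by move=> eq_w; apply/eqP; rewrite eqn_leq !le_fibre.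
Qed.

Lemma card_colour_fibre_le c :
  (#|colour_fibre c| * #|weight_class c| <= #|bijs_onto k S|)%N.
Proof.
rewrite mulnC -sum_nat_const -(sum_card_fibres (bijs_onto k S) colours).
rewrite [X in (_ <= X)%N](bigID (mem (weight_class c))) /=.
apply/(leq_trans _ (leq_addr _ _))/eq_leq/eq_bigr => c'.
by rewrite inE => /eqP eq_w; rewrite (card_colour_fibre_weight _ _ eq_w).
Qed.

End ColourFibres.

Arguments colours {d k} x pi.
Arguments colour_fibre {d k} x S c.

Definition prefix_xor {k : nat} (c : {ffun 'I_k -> bool}) : {ffun 'I_k -> bool} :=
  [ffun t : 'I_k => \big[addb/false]_(s < k | (s <= t)%N) c s].

Lemma zof_colours {d k : nat} (x : {ffun 'I_d -> bool}) (pi : {ffun 'I_k -> 'I_d}) :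
  zof x pi = prefix_xor (colours x pi).
Proof. by apply/ffunP => t; rewrite !ffunE; apply: eq_bigr => s _; rewrite ffunE. Qed.

Lemma card_zof_fibre {d k : nat} (x : {ffun 'I_d -> bool}) (S : {set 'I_d}) z :
  #|[set pi in bijs_onto k S | zof x pi == z]| =
  (\sum_(c | prefix_xor c == z) #|colour_fibre x S c|)%N.
Proof.
rewrite -sum1_card (partition_big (colours x) (fun c => prefix_xor c == z)); last first.
  by move=> pi /setIdP[_]; rewrite zof_colours.
apply: eq_bigr => c /eqP <-; rewrite -sum1_card; apply: eq_bigl => pi.
rewrite !inE zof_colours.
by case: (colours x pi =P c) => [->|_]; rewrite ?eqxx ?andbT ?andbF.
Qed.

Definition likelihood_bound {R : realType} {d k : nat} (s : sample d k) : R :=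
  (2 ^+ d)^-1 * \sum_(c | prefix_xor c == s.2) (#|weight_class c|%:R)^-1.

Lemma likelihood_bound_ge0 {R : realType} {d k : nat} (s : sample d k) :
  0 <= likelihood_bound (R := R) s.
Proof. by rewrite mulr_ge0 ?invr_ge0 ?exprn_ge0 ?sumr_ge0 // => c _; rewrite invr_ge0. Qed.

Lemma p_sample_ge0 {R : realType} {d k : nat} (S : {set 'I_d}) (s : sample d k) :
  0 <= p_sample (R := R) S s.
Proof. by rewrite mulr_ge0 ?invr_ge0 ?exprn_ge0 ?divr_ge0. Qed.

Lemma p_sample_le_bound {R : realType} {d k : nat} (S : {set 'I_d}) (s : sample d k) :
  p_sample (R := R) S s <= likelihood_bound s.
Proof.
case: s => x z; apply: ler_wpM2l; first by rewrite invr_ge0 exprn_ge0.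
rewrite /= card_zof_fibre natr_sum mulr_suml; apply: ler_sum => c _.
have class_gt0 : (0 < #|weight_class c|)%N by apply/card_gt0P; exists c; rewrite inE.
have [->|bijs_gt0] := posnP #|bijs_onto k S|; first by rewrite invr0 mulr0 invr_ge0.
rewrite ler_pdivrMr ?ltr0n // mulrC ler_pdivlMr ?ltr0n // -natrM ler_nat.
exact: card_colour_fibre_le.
Qed.

Lemma sum_inv_card_weight_class {R : numFieldType} {k : nat} :
  \sum_(c : {ffun 'I_k -> bool}) (#|weight_class c|%:R : R)^-1 <= k.+1%:R.
Proof.
have weight_lt (c : {ffun 'I_k -> bool}) : (weight c < k.+1)%N.
  by rewrite ltnS -[k in (_ <= k)%N](size_enum_ord k) count_size.
rewrite (partition_big (fun c => Ordinal (weight_lt c)) xpredT) //=.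
apply: (@le_trans _ _ (\sum_(w < k.+1) 1)); last by rewrite sumr_const card_ord.
apply: ler_sum => w _.
pose W : {set {ffun 'I_k -> bool}} := [set c | weight c == w].
rewrite (eq_bigl (fun c => c \in W)) => [|c]; last by rewrite !inE -val_eqE.
rewrite (eq_bigr (fun=> (#|W|%:R)^-1)) => [|c]; last first.
  by rewrite inE => /eqP w_c; rewrite /weight_class w_c.
rewrite sumr_const -[_^-1 *+ _]mulr_natr.
have [->|W_gt0] := posnP #|W|; first by rewrite mulr0.
by rewrite mulVf // pnatr_eq0 -lt0n.
Qed.

Lemma sum_sample_le {R : numFieldType} {d k : nat}
    (f : {ffun 'I_d -> bool} -> {ffun 'I_k -> bool} -> R) (b : R) :
  (forall x, \sum_z f x z <= b) -> \sum_(s : sample d k) (2 ^+ d)^-1 * f s.1 s.2 <= b.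
Proof.
move=> sum_f_le; rewrite -(pair_big xpredT xpredT (fun x z => (2 ^+ d)^-1 * f x z)) /=.
apply: (@le_trans _ _ (\sum_(x : {ffun 'I_d -> bool}) (2 ^+ d)^-1 * b)).
  by apply: ler_sum => x _; rewrite -mulr_sumr ler_wpM2l ?invr_ge0 ?exprn_ge0.
rewrite -mulr_sumr sumr_const card_ffun card_bool card_ord -[b *+ _]mulr_natr natrX.
by rewrite mulrCA mulVf ?mulr1 // expf_neq0 // pnatr_eq0.
Qed.

Lemma sum_likelihood_bound {R : realType} {d k : nat} :
  \sum_(s : sample d k) likelihood_bound (R := R) s <= k.+1%:R.
Proof.
apply: (sum_sample_le (fun _ z =>
  \sum_(c | prefix_xor c == z) (#|weight_class c|%:R)^-1)) => x.
apply: le_trans (sum_inv_card_weight_class (k := k)).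
by rewrite [leRHS](partition_big prefix_xor xpredT).
Qed.

Lemma sum_p_sample_le1 {R : realType} {d k : nat} (S : {set 'I_d}) :
  \sum_(s : sample d k) p_sample (R := R) S s <= 1.
Proof.
apply: (sum_sample_le (fun x z =>
  #|[set pi in bijs_onto k S | zof x pi == z]|%:R / #|bijs_onto k S|%:R)) => x.
rewrite -mulr_suml -natr_sum sum_card_fibres.
have [->|bijs_gt0] := posnP #|bijs_onto k S|; first by rewrite mul0r.
by rewrite mulfV // pnatr_eq0 -lt0n.
Qed.

Lemma sum_prod_ffun {R : comPzSemiRingType} {Y : finType} (m : nat) (q : Y -> R) :
  \sum_(y : {ffun 'I_m -> Y}) \prod_i q (y i) = (\sum_s q s) ^+ m.
Proof. by rewrite -(bigA_distr_bigA (fun _ : 'I_m => q)) prodr_const card_ord. Qed.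

Lemma sum_kernel_success_le {R : numDomainType} {T Y : finType} (A : {pred T})
    (p : T -> Y -> R) (q : Y -> R) (est : Y -> T -> R) :
  (forall S y, 0 <= p S y <= q y) ->
  (forall y, (forall S, 0 <= est y S) /\ \sum_S est y S = 1) ->
  \sum_(S in A) \sum_y p S y * est y S <= \sum_y q y.
Proof.
move=> p_bound est_kernel; rewrite exchange_big; apply: ler_sum => y _ /=.
have [est_ge0 est_sum1] := est_kernel y.
have q_est_ge0 S : 0 <= q y * est y S.
  by have /andP[p_ge0 p_le] := p_bound S y; rewrite mulr_ge0 // (le_trans p_ge0).
apply: (@le_trans _ _ (\sum_(S in A) q y * est y S)).
  by apply: ler_sum => S _; have /andP[_ p_le] := p_bound S y; rewrite ler_wpM2r.
rewrite -[leRHS]mulr1 -est_sum1 mulr_sumr [leRHS](bigID (mem A)) /=.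
by rewrite lerDl sumr_ge0.
Qed.

Lemma card_ksubsets {d k : nat} : #|ksubsets d k| = 'C(d, k).
Proof. by rewrite card_draws card_ord. Qed.

Lemma success_prob_le {R : realType} {d k m : nat}
    {est : {ffun 'I_m -> sample d k} -> {set 'I_d} -> R} :
  is_estimator est -> success_prob est <= k.+1%:R ^+ m / 'C(d, k)%:R.
Proof.
move=> est_kernel; rewrite /success_prob -mulr_sumr card_ksubsets mulrC.
rewrite ler_wpM2r ?invr_ge0 //.
pose q (y : {ffun 'I_m -> sample d k}) : R := \prod_i likelihood_bound (y i).
apply: le_trans (sum_kernel_success_le _ _ q _ _ est_kernel) _.
  move=> S y; rewrite /p_samples /q prodr_ge0 ?ler_prod // => i _.
    by rewrite p_sample_ge0 p_sample_le_bound.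
  exact: p_sample_ge0.
rewrite sum_prod_ffun lerXn2r ?nnegrE ?sum_likelihood_bound //.
by rewrite sumr_ge0 // => s _; apply: likelihood_bound_ge0.
Qed.

Lemma estimator_le1 {R : realType} {d k m : nat}
    {est : {ffun 'I_m -> sample d k} -> {set 'I_d} -> R} :
  is_estimator est -> forall y S, est y S <= 1.
Proof.
move=> est_kernel y S; have [est_ge0 <-] := est_kernel y.
by rewrite (bigD1 S) //= lerDl sumr_ge0.
Qed.

Lemma success_prob_le1 {R : realType} {d k m : nat}
    {est : {ffun 'I_m -> sample d k} -> {set 'I_d} -> R} :
  is_estimator est -> success_prob est <= 1.
Proof.
move=> est_kernel; rewrite /success_prob -mulr_sumr.
apply: (@le_trans _ _ (#|ksubsets d k|%:R^-1 * \sum_(S in ksubsets d k) 1)).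
  rewrite ler_wpM2l ?invr_ge0 //; apply: ler_sum => S _.
  have p_samples_ge0 y : 0 <= p_samples (R := R) S y.
    by apply: prodr_ge0 => i _; apply: p_sample_ge0.
  apply: (@le_trans _ _ (\sum_y p_samples (R := R) S y)).
    by apply: ler_sum => y _; rewrite ler_piMr ?estimator_le1.
  rewrite sum_prod_ffun exprn_ile1 ?sum_p_sample_le1 //.
  by rewrite sumr_ge0 // => s _; apply: p_sample_ge0.
rewrite sumr_const.
have [->|N_gt0] := posnP #|ksubsets d k|; first by rewrite mulr0.
by rewrite mulVf // pnatr_eq0 -lt0n.
Qed.

Lemma ln2_ge_half {R : realType} : 1 / 2 <= ln (2 : R).
Proof.
have half_gtN1 : -1 < - (1 / 2) :> R by lra.
have := le_ln1Dx half_gtN1; rewrite (_ : 1 + - (1 / 2) = 2^-1); last by field.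
rewrite lnV ?posrE //; lra.
Qed.

Lemma neg_xlnx_le_ln2 {R : realType} (a : R) : 0 < a -> - (a * ln a) <= ln 2.
Proof.
move=> a_gt0; set b := Num.sqrt a.
have b_gt0 : 0 < b by rewrite sqrtr_gt0.
have a_sq : a = b * b by rewrite -expr2 sqr_sqrtr // ltW.
have ln_a : ln a = ln b + ln b by rewrite a_sq lnM ?posrE.
have neg_ln_b : - ln b <= b^-1 - 1.
  have : -1 < b^-1 - 1 by have := invr_gt0 b; rewrite b_gt0; lra.
  by move/le_ln1Dx; rewrite addrC subrK lnV ?posrE.
(* With b = sqrt a: -a ln a = 2 b^2 (-ln b) <= 2 b (1 - b) <= 1/2. *)
have : b * b * (- ln b) <= b * b * (b^-1 - 1) by rewrite ler_pM2l ?mulr_gt0.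
rewrite mulrBr mulr1 mulfK ?gt_eqF // => le_b.
have := sqr_ge0 (2 * b - 1); have := @ln2_ge_half R; rewrite ln_a a_sq; nra.
Qed.

Lemma fano_ln_le {R : realType} {a N Q : R} :
  1 <= N -> 1 <= Q -> a <= 1 -> a * N <= Q -> a * ln N <= ln Q + ln 2.
Proof.
move=> N_ge1 Q_ge1 a_le1 aN_le.
have lnN_ge0 : 0 <= ln N by apply: ln_ge0.
have lnQ_ge0 : 0 <= ln Q by apply: ln_ge0.
have ln2_gt0 : 0 < ln (2 : R) by rewrite ln_gt0 // ltr1n.
have [a_le0|a_gt0] := lerP a 0; first by have := mulr_le0_ge0 a_le0 lnN_ge0; lra.
have N_gt0 : 0 < N by apply: lt_le_trans N_ge1.
have ln_aN : ln a + ln N <= ln Q.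
  by rewrite -lnM ?posrE // ler_ln ?posrE ?mulr_gt0 // (lt_le_trans ltr01 Q_ge1).
have : a * ln N <= a * (ln Q - ln a) by rewrite ler_pM2l //; lra.
have : a * ln Q <= ln Q by rewrite ler_piMl.
have := neg_xlnx_le_ln2 a a_gt0; lra.
Qed.

Lemma fano_log2_bound {R : realType} {a N b : R} {m : nat} :
  1 <= N -> 1 < b -> a <= 1 -> a * N <= b ^+ m -> (a * log2 N - 1) / log2 b <= m%:R.
Proof.
move=> N_ge1 b_gt1 a_le1 aN_le.
have ln2_gt0 : 0 < ln (2 : R) by rewrite ln_gt0 // ltr1n.
have lnb_gt0 : 0 < ln b by rewrite ln_gt0.
have := fano_ln_le N_ge1 (exprn_ege1 m (ltW b_gt1)) a_le1 aN_le.
rewrite lnXn ?(lt_trans ltr01) // -[ln b *+ m]mulr_natl => fano.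
rewrite /log2 ler_pdivrMr ?divr_gt0 // -(ler_pM2r ln2_gt0).
have -> : (a * (ln N / ln 2) - 1) * ln 2 = a * ln N - ln 2 by field; rewrite gt_eqF.
have -> : m%:R * (ln b / ln 2) * ln 2 = m%:R * ln b by field; rewrite gt_eqF.
lra.
Qed.

Lemma fano_bound_mono {R : realFieldType} (a X Y L M : R) :
  0 < L -> 0 <= X <= Y -> 0 <= M -> (a * Y - 1) / L <= M -> (a * X - 1) / L <= M.
Proof.
move=> L_gt0 /andP[X_ge0 X_le_Y] M_ge0; have [a_le0|a_gt0] := lerP a 0.
  move=> _; apply: le_trans M_ge0; rewrite pmulr_lle0 ?invr_gt0 //.
  by have := mulr_le0_ge0 a_le0 X_ge0; lra.
by apply: le_trans; rewrite ler_pM2r ?invr_gt0 // lerD2r ler_pM2l.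
Qed.

Lemma exprn_div_le_bin {R : numFieldType} (d k : nat) :
  (k <= d)%N -> ((d%:R : R) / k%:R) ^+ k <= 'C(d, k)%:R.
Proof.
elim: k d => [|k IHk] [|d] // k_le_d; rewrite ?expr0 ?bin0 //.
rewrite ltnS in k_le_d.
set r : R := d.+1%:R / k.+1%:R.
have bin_rec : ('C(d.+1, k.+1)%:R : R) = r * 'C(d, k)%:R.
  apply: (mulfI (_ : k.+1%:R != 0 :> R)); first by rewrite pnatr_eq0.
  rewrite -natrM -mul_bin_diag natrM /r /=; field.
  by rewrite addrC natr1 pnatr_eq0.
rewrite bin_rec exprS ler_wpM2l ?divr_ge0 //; apply: le_trans (IHk d k_le_d).
have [->|k_gt0] := posnP k; first by rewrite !expr0.
rewrite lerXn2r ?nnegrE ?divr_ge0 // /r ler_pdivrMr ?ltr0n // mulrAC.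
by rewrite ler_pdivlMr ?ltr0n // -!natrM ler_nat; nia.
Qed.

Lemma log2_bin_ge {R : realType} (d k : nat) :
  (0 < k)%N -> (k <= d)%N -> k%:R * log2 (d%:R / k%:R) <= log2 ('C(d, k)%:R : R).
Proof.
move=> k_gt0 k_le_d; have d_gt0 : (0 < d)%N := leq_trans k_gt0 k_le_d.
rewrite /log2 mulrA ler_pM2r ?invr_gt0 ?ln_gt0 ?ltr1n // mulr_natl.
rewrite -lnXn ?divr_gt0 ?ltr0n // ler_ln ?posrE ?exprn_gt0 ?divr_gt0 ?ltr0n ?bin_gt0 //.
exact: exprn_div_le_bin.
Qed.

Theorem theorem11p2 (R : realType) (d k m : nat) (delta : R)
  (est : {ffun 'I_m -> sample d k} -> {set 'I_d} -> R) :
  (1 <= k)%N -> (k <= d.-1)%N ->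
  is_estimator est ->
  1 - delta <= success_prob est ->
  ((1 - delta) * log2 ('C(d, k)%:R) - 1) / log2 (k.+1%:R) <= m%:R
  /\ ((2 * k <= d)%N ->
      ((1 - delta) * (k%:R * log2 (d%:R / k%:R)) - 1) / log2 (k.+1%:R) <= m%:R).
Proof.
move=> k_gt0 k_le_d1 est_kernel success_ge.
have k_le_d : (k <= d)%N := leq_trans k_le_d1 (leq_pred d).
have bin_ge1 : 1 <= 'C(d, k)%:R :> R by rewrite ler1n bin_gt0.
have k1_gt1 : 1 < k.+1%:R :> R by rewrite ltr1n ltnS.
have a_le1 : 1 - delta <= 1 := le_trans success_ge (success_prob_le1 est_kernel).
have a_bin_le : (1 - delta) * 'C(d, k)%:R <= k.+1%:R ^+ m.
  rewrite -ler_pdivlMr ?(lt_le_trans ltr01 bin_ge1) //.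
  exact: le_trans success_ge (success_prob_le est_kernel).
have fano_bin := fano_log2_bound bin_ge1 k1_gt1 a_le1 a_bin_le.
split=> // _; apply: fano_bound_mono fano_bin => //.
- by rewrite /log2 divr_gt0 ?ln_gt0 ?ltr1n.
- rewrite log2_bin_ge // andbT mulr_ge0 // /log2 divr_ge0 ?ln_ge0 ?ler1n //.
  by rewrite ler_pdivlMr ?ltr0n // mul1r ler_nat.
Qed.
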